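(* Let $n\ge2$, and let $U_0,U_1,\dots,U_T$ be any unitaries on $H$ (a quantum query algorithm with $T$ queries to the comparison oracle). For each permutation $\sigma$ of $\{0,\dots,n-1\}$ and $0\le t\le T$ let $|\psi_\sigma^t\rangle=U_tO_\sigma U_{t-1}O_\sigma\cdots U_1O_\sigma U_0|\vec0\rangle$ (with $t$ oracle applications), and define $$s_t=\sum_{\sigma,\tau} w(\sigma,\tau)\,\bigl|\langle\psi^t_\sigma|\psi^t_\tau\rangle\bigr|,$$ the sum over all ordered pairs of permutations. Then $|s_{t+1}-s_t|\le 2\pi\, n!$ for all $0\le t\le T-1$.
   Context: For a permutation $\sigma$ of $\{0,\dots,n-1\}$, the comparison matrix $M_\sigma\in\{0,1\}^{n\times n}$ has $(M_\sigma)_{i,j}=1$ if $\sigma(i)\le\sigma(j)$ and $0$ otherwise. $H$ is the Hilbert space spanned by orthonormal vectors $|i,j,b,c\rangle$, $0\le i,j\le n-1$, $b\in\{0,1\}$, $c\in\{0,1\}^w$ for some fixed $w\ge0$, and $O_\sigma$ is the unitary $O_\sigma|i,j,b,c\rangle=|i,j,b\oplus(M_\sigma)_{i,j},c\rangle$. For integers $0\le k\le n-2$ and $1\le d\le n-k-1$, define $\sigma^{(k,d)}=(k+d,k+d-1,\dots,k)\circ\sigma$, where $(k+d,k+d-1,\dots,k)$ is the cyclic permutation sending $k+d\mapsto k+d-1\mapsto\cdots\mapsto k\mapsto k+d$. The weight is $w(\sigma,\tau)=1/d$ if $\tau=\sigma^{(k,d)}$ for some such $k,d$, and $w(\sigma,\tau)=0$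 otherwise. *)

From HB Require Import structures.
From mathcomp Require Import all_boot all_order all_algebra all_fingroup.
From mathcomp Require Import spectral.
From mathcomp Require Import complex.
From mathcomp Require Import reals trigo.
From mathcomp Require Import zify.

Set Implicit Arguments.
Unset Strict Implicit.
Unset Printing Implicit Defensive.

Import Order.TTheory GRing.Theory Num.Theory.
Local Open Scope ring_scope.

(* The cyclic permutation (k+d, k+d-1, ..., k) of {0,...,n-1}:              *)
(*   k+d |-> k+d-1 |-> ... |-> k |-> k+d, other points fixed.               *)
(* (Only meaningful when k + d < n; otherwise we return the identity.)      *)
Definition cyc_fun (n k d : nat) (j : 'I_n) : 'I_n :=
  if (k + d < n)%N then
    insubd j (if (k < j <= k + d)%N then j.-1 else if j == k :> nat then k + d else j)%N
  else j.

Lemma cyc_fun_inj n k d : injective (@cyc_fun n k d).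
Proof.
move=> x y; rewrite /cyc_fun; case: ifP => // hkd.
have hx := ltn_ord x; have hy := ltn_ord y.
have E : forall z : 'I_n, val (insubd z (if (k < z <= k + d)%N then z.-1
            else if z == k :> nat then k + d else z)%N) =
          (if (k < z <= k + d)%N then z.-1 else if z == k :> nat then k + d else z)%N.
  move=> z; have hz := ltn_ord z.
  have hm : ((if (k < z <= k + d) then z.-1 else if z == k :> nat then k + d else z) < n)%N.
    case: ifP => [/andP[h1 h2]|_]; first by lia.
    by case: ifP => _; lia.
  by rewrite val_insubd hm.
move=> /(congr1 val); rewrite !E => h; apply: val_inj => /=.
move: h; case ha: (k < x <= k + d)%N; case hb: (k < y <= k + d)%N;
  case: (x =P k :> nat) => ex; case: (y =P k :> nat) => ey; lia.
Qed.

Definition cyc_perm (n k d : nat) : {perm 'I_n} := perm (@cyc_fun_inj n k d).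

(* sigma^{(k,d)} = (k+d, ..., k) o sigma ; in MathComp (s * t) x = t (s x). *)
Definition sigma_kd (n k d : nat) (s : {perm 'I_n}) : {perm 'I_n} :=
  (s * cyc_perm n k d)%g.

Definition valid_kd (n k d : nat) : bool := (k <= n - 2)%N && (1 <= d <= n - k - 1)%N.

(* The weight w(sigma, tau): 1/d if tau = sigma^{(k,d)} for an admissible
   (k,d), and 0 otherwise.  (k and d are bounded by n, so we search over
   'I_n * 'I_n.)                                                            *)
Definition weight (C : numFieldType) (n : nat) (s t : {perm 'I_n}) : C :=
  match [pick kd : 'I_n * 'I_n | valid_kd n kd.1 kd.2 && (t == sigma_kd kd.1 kd.2 s)] with
  | Some kd => (kd.2%:R)^-1
  | None => 0
  end.

(* The Hilbert space H, with orthonormal basis |i,j,b,c>.                   *)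
Definition basis (n w : nat) : finType := ('I_n * 'I_n * bool * w.-tuple bool)%type.

Definition dimH (n w : nat) : nat := #|basis n w|.

Definition cmp (n : nat) (s : {perm 'I_n}) (i j : 'I_n) : bool := (s i <= s j)%N.

Definition oracle_basis (n w : nat) (s : {perm 'I_n}) (x : basis n w) : basis n w :=
  let: (i, j, b, c) := x in (i, j, b (+) cmp s i j, c).

Definition oracle (C : numFieldType) (n w : nat) (s : {perm 'I_n}) : 'M[C]_(dimH n w) :=
  \matrix_(p, q) (enum_val p == oracle_basis s (enum_val q))%:R.

Definition init (C : numFieldType) (n w : nat) : 'cV[C]_(dimH n w) :=
  \col_p (let: (i, j, b, c) := (enum_val p : basis n w) in
          [&& val i == 0%N, val j == 0%N, ~~ b & all negb c])%:R.

Fixpoint psi (C : numFieldType) (n w : nat) (U : nat -> 'M[C]_(dimH n w))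
    (s : {perm 'I_n}) (t : nat) : 'cV[C]_(dimH n w) :=
  match t with
  | 0 => U 0%N *m init C n w
  | t'.+1 => U t *m (oracle C w s *m psi U s t')
  end.

Definition inner (C : numClosedFieldType) (m : nat) (u v : 'cV[C]_m) : C :=
  \sum_p (u p 0)^* * v p 0.

Definition s_t (C : numClosedFieldType) (n w : nat) (U : nat -> 'M[C]_(dimH n w))
    (t : nat) : C :=
  \sum_(s : {perm 'I_n}) \sum_(r : {perm 'I_n})
     weight C s r * `| inner (psi U s t) (psi U r t) |.

From Pilot Require Import Defs.
From mathcomp Require Import all_boot all_order all_algebra all_fingroup.
From mathcomp Require Import spectral complex reals trigo.
From mathcomp Require Import topology normedtype derive.
From mathcomp Require Import zify ring lra.

(* Unitaries preserve inner products, so s_(t+1) - s_t only sees the query: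
   |<O_s u|O_r v> - <u|v>| is bounded by a sum over the basis states |i,j,b,c>
   whose comparison bit differs for s and r = s^(k,d).  For such a pair (i,j),
   min(s i, s j) = k and the gaps g = |s i - s j| - 1, g' = |r i - r j| - 1
   satisfy g + g' + 1 = d.  Splitting |u_x| |v_x| by AM-GM with the weight
   sqrt(2g+1) / sqrt(2g'+1) leaves, for each s and x, a sum over (k,d) of
   sqrt(2g+1) / (d sqrt(2g'+1)) over distinct g'; its terms are dominated by the
   increments of 2 atan(sqrt(2g'+1) / sqrt(2g+1)), so it is below pi.  The same
   holds with the roles of s and r exchanged, and summing the normalized
   amplitudes over the n! permutations gives 2 pi n!. *)

Set Implicit Arguments.
Unset Strict Implicit.
Unset Printing Implicit Defensive.

Import Order.TTheory GRing.Theory Num.Theory.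
Import numFieldNormedType.Exports.
Import ComplexField.Normc.

Definition cycn (k d x : nat) : nat :=
  if k < x <= k + d then x.-1 else if x == k then k + d else x.

Lemma cyc_permE n k d (j : 'I_n) : k + d < n -> val (cyc_perm n k d j) = cycn k d j.
Proof.
move=> kd_lt; rewrite /cyc_perm permE /cyc_fun kd_lt val_insubd -/(cycn k d j) ifT //.
by have := ltn_ord j; rewrite /cycn; case: ifP => _; [|case: eqP]; lia.
Qed.

Definition gapn (x y : nat) : nat := (maxn x y - minn x y).-1.

Lemma cycn_flip k d x y : 0 < d -> (x <= y) != (cycn k d x <= cycn k d y) ->
  [/\ gapn x y + gapn (cycn k d x) (cycn k d y) + 1 = d, minn x y = k
     & minn (cycn k d x) (cycn k d y) - gapn x y = k].
Proof.
rewrite /gapn /cycn => d_gt0.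
case: (boolP (k < x <= k + d)) => hx; case: (boolP (k < y <= k + d)) => hy;
  case: (x =P k) => ex; case: (y =P k) => ey => /eqP flip; split; lia.
Qed.

Section CycleFlips.
Variable n : nat.
Implicit Types (s : {perm 'I_n}) (ij : 'I_n * 'I_n).

Definition flips s r ij : bool := cmp s ij.1 ij.2 != cmp r ij.1 ij.2.

Definition gap s ij : nat := gapn (s ij.1) (s ij.2).

Lemma flips_sigma_kd k d s ij : valid_kd n k d -> flips s (sigma_kd k d s) ij ->
  [/\ gap s ij + gap (sigma_kd k d s) ij + 1 = d, minn (s ij.1) (s ij.2) = k
    & minn (sigma_kd k d s ij.1) (sigma_kd k d s ij.2) - gap s ij = k].
Proof.
move=> /andP[k_le /andP[d_gt0 d_le]]; rewrite /flips /cmp /gap /sigma_kd !permM.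
have kd_lt : k + d < n by have := ltn_ord (s ij.1); lia.
by rewrite !cyc_permE //; apply: cycn_flip.
Qed.

Lemma sigma_kd_mulV k d s : sigma_kd k d (s * (cyc_perm n k d)^-1) = s.
Proof. exact: mulgKV. Qed.

Lemma gap_sigma_kd_inj s ij :
  {in [pred kd : 'I_n * 'I_n | valid_kd n kd.1 kd.2 && flips s (sigma_kd kd.1 kd.2 s) ij] &,
    injective (fun kd : 'I_n * 'I_n => gap (sigma_kd kd.1 kd.2 s) ij)}.
Proof.
move=> [k d] [k' d'] /andP[/= v f] /andP[/= v' f'] /= gap_eq.
apply/eqP; rewrite xpair_eqE -!val_eqE /=.
have [d_eq k_eq _] := flips_sigma_kd v f; have [d_eq' k_eq' _] := flips_sigma_kd v' f'.
by rewrite -d_eq gap_eq d_eq' -k_eq k_eq' !eqxx.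
Qed.

Lemma gap_sigma_kdV_inj s ij :
  {in [pred kd : 'I_n * 'I_n | valid_kd n kd.1 kd.2 && flips (s * (cyc_perm n kd.1 kd.2)^-1) s ij] &,
    injective (fun kd : 'I_n * 'I_n => gap (s * (cyc_perm n kd.1 kd.2)^-1) ij)}.
Proof.
move=> [k d] [k' d'] /andP[/= v f] /andP[/= v' f'] /= gap_eq.
rewrite -{2}(sigma_kd_mulV k d s) in f; rewrite -{2}(sigma_kd_mulV k' d' s) in f'.
have [d_eq _ k_eq] := flips_sigma_kd v f; have [d_eq' _ k_eq'] := flips_sigma_kd v' f'.
rewrite !sigma_kd_mulV in d_eq k_eq d_eq' k_eq'.
apply/eqP; rewrite xpair_eqE -!val_eqE /=.
by rewrite -d_eq gap_eq d_eq' -k_eq gap_eq k_eq' !eqxx.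
Qed.
End CycleFlips.

Local Open Scope ring_scope.

Section RealEstimates.
Variable R : realType.

Lemma amgm (l a b : R) : 0 < l -> 2 * (a * b) <= l * a ^+ 2 + b ^+ 2 / l.
Proof.
move=> l_gt0; rewrite -subr_ge0.
have -> : l * a ^+ 2 + b ^+ 2 / l - 2 * (a * b) = (l * a - b) ^+ 2 / l.
  by field; rewrite gt_eqF.
by rewrite divr_ge0 ?sqr_ge0 ?ltW.
Qed.

Lemma atanB_ge (x y : R) : 0 <= x <= y -> (y - x) / (1 + y ^+ 2) <= atan y - atan x.
Proof.
move=> /andP[x0 xy].
have atan_cont : continuous (@atan R) by move=> z; apply: continuous_atan.
have [c /andP[cx cy] ->] := MVT_segment xy (fun z _ => is_derive1_atan z)
  (continuous_subspaceT atan_cont).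
rewrite bnd_simp in cx cy.
rewrite mulrC ler_wpM2r ?subr_ge0 // lef_pV2 ?posrE ?ltr_pwDl ?sqr_ge0 // lerD2l.
by rewrite ler_sqr ?nnegrE // (le_trans x0).
Qed.

Lemma atanB_ge_term (s u v : R) : 0 < s -> 0 < u -> 0 <= v -> u * v <= u ^+ 2 - 1 ->
  2 * s / ((s ^+ 2 + u ^+ 2) * u) <= 2 * (atan (u / s) - atan (v / s)).
Proof.
move=> s0 u0 v0 uv.
have vu : v <= u by rewrite -(ler_pM2l u0); nra.
have uvs : 0 <= v / s <= u / s.
  by rewrite divr_ge0 ?(ltW s0) //= ler_pM2r // invr_gt0.
apply: le_trans (ler_wpM2l _ (atanB_ge uvs)); last by [].
have su_gt0 : 0 < s ^+ 2 + u ^+ 2 by rewrite ltr_pwDl ?sqr_ge0 ?exprn_gt0.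
rewrite -subr_ge0 (_ : _ - _ = 2 * s / ((s ^+ 2 + u ^+ 2) * u) * (u ^+ 2 - u * v - 1)).
  by apply: mulr_ge0; [rewrite divr_ge0 ?mulr_ge0 ?ltW | lra].
by field; rewrite !gt_eqF.
Qed.

(* For [N = 0] the truncated [(2 * N).-1] is [0], and the bound is [2 * atan 0 = 0]. *)
Lemma sum_ratio_le_atan (a N : nat) :
  \sum_(g < N) ((a + g + 1)%N%:R)^-1 * (Num.sqrt (2 * a + 1)%N%:R / Num.sqrt (2 * g + 1)%N%:R)
    <= 2 * atan (Num.sqrt (2 * N)%N.-1%:R / Num.sqrt (2 * a + 1)%N%:R :> R).
Proof.
elim: N => [|N IH]; first by rewrite big_ord0 sqrtr0 mul0r atan0 mulr0.
have nat_ineq : ((2 * N + 1) * (2 * N).-1 <= (2 * N) ^ 2)%N.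
  by case: N {IH} => [|M] //; rewrite -mulnn mulnS /=; nia.
rewrite (_ : (2 * N.+1).-1 = 2 * N + 1)%N; last by lia.
rewrite big_ord_recr /=; move: IH.
set s : R := Num.sqrt (2 * a + 1)%N%:R; set u : R := Num.sqrt (2 * N + 1)%N%:R.
set v : R := Num.sqrt (2 * N)%N.-1%:R.
have s0 : 0 < s by rewrite sqrtr_gt0 ltr0n addn1.
have u0 : 0 < u by rewrite sqrtr_gt0 ltr0n addn1.
have ss : s ^+ 2 = (2 * a + 1)%N%:R by rewrite sqr_sqrtr ?ler0n.
have uu : u ^+ 2 = (2 * N + 1)%N%:R by rewrite sqr_sqrtr ?ler0n.
have uv : u * v <= u ^+ 2 - 1.
  rewrite uu -sqrtrM ?ler0n // -natrM natrD addrK.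
  rewrite -[X in _ <= X]ger0_norm ?ler0n // -sqrtr_sqr ler_sqrt ?exprn_ge0 ?ler0n //.
  by rewrite -natrX ler_nat.
move=> IH; have := @atanB_ge_term s u v s0 u0 (sqrtr_ge0 _) uv.
suff -> : ((a + N + 1)%N%:R)^-1 * (s / u) = 2 * s / ((s ^+ 2 + u ^+ 2) * u) by lra.
have -> : s ^+ 2 + u ^+ 2 = 2 * (a + N + 1)%N%:R.
  by rewrite ss uu -natrD -[2]/(2%:R) -natrM; congr _%:R; lia.
by field; rewrite gt_eqF //= -natrD -[1]/(1%:R) -natrD pnatr_eq0 addn1.
Qed.

Lemma sum_ratio_le_pi (a N : nat) :
  \sum_(g < N) ((a + g + 1)%N%:R)^-1 * (Num.sqrt (2 * a + 1)%N%:R / Num.sqrt (2 * g + 1)%N%:R)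
    <= pi :> R.
Proof.
apply: le_trans (sum_ratio_le_atan a N) _.
by have := atan_ltpi2 (Num.sqrt (2 * N)%N.-1%:R / Num.sqrt (2 * a + 1)%N%:R :> R); lra.
Qed.

Lemma ler_sum_inj (I : finType) (P : pred I) (b : I -> nat) (F : nat -> R) (m : nat) :
  (forall g, 0 <= F g) -> {in P &, injective b} -> {in P, forall x, b x < m}%N ->
  \sum_(x | P x) F (b x) <= \sum_(g < m) F g.
Proof.
move=> F0 b_inj b_lt; rewrite -big_image -(big_mkord xpredT) /index_iota subn0.
set s := image b P.
have s_uniq : uniq s by rewrite map_inj_in_uniq ?enum_uniq // => x y; rewrite !mem_enum; apply: b_inj.
have s_iota : perm_eq s [seq g <- iota 0 m | g \in s].
  apply: uniq_perm; rewrite ?filter_uniq ?iota_uniq // => g.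
  rewrite mem_filter mem_iota add0n /=; case gs: (g \in s) => //=.
  by case/imageP: gs => x Px ->; rewrite b_lt.
rewrite (perm_big _ s_iota) big_filter [X in _ <= X](bigID (mem s)) /= lerDl.
exact: sumr_ge0.
Qed.

Lemma sum_ratio_inj_le_pi (I : finType) (P : pred I) (a : nat) (b d : I -> nat) :
  {in P &, injective b} -> {in P, forall x, d x = a + b x + 1}%N ->
  \sum_(x | P x) ((d x)%:R)^-1 * (Num.sqrt (2 * a + 1)%N%:R / Num.sqrt (2 * b x + 1)%N%:R)
    <= pi :> R.
Proof.
move=> b_inj dE.
pose F g := ((a + g + 1)%N%:R)^-1 * (Num.sqrt (2 * a + 1)%N%:R / Num.sqrt (2 * g + 1)%N%:R) : R.
rewrite (eq_bigr (F \o b)) => [|x Px]; last by rewrite /= dE.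
apply: le_trans (sum_ratio_le_pi a (\max_(x | P x) b x).+1).
apply: ler_sum_inj => // [g|x Px]; last by rewrite ltnS (leq_bigmax_cond _ Px).
by rewrite mulr_ge0 ?divr_ge0 ?sqrtr_ge0 ?invr_ge0 ?ler0n.
Qed.

Lemma sum_coef_exchange_le (J K : finType) (V : pred J) (P : J -> K -> bool)
    (e : J -> R) (c : J -> K -> R) (x : K -> R) (M : R) :
  (forall k, 0 <= x k) -> (forall k, \sum_(j | V j && P j k) e j * c j k <= M) ->
  \sum_(j | V j) e j * \sum_(k | P j k) c j k * x k <= M * \sum_k x k.
Proof.
move=> x_ge0 coef_le; under eq_bigr do rewrite mulr_sumr.
rewrite (exchange_big_dep xpredT) //= mulr_sumr; apply: ler_sum => k _.
under eq_bigr do rewrite mulrA; rewrite -mulr_suml.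
exact: ler_wpM2r.
Qed.
End RealEstimates.

Section GapRatio.
Variables (R : realType) (n : nat).
Implicit Types (s r : {perm 'I_n}) (ij : 'I_n * 'I_n).

Definition gap_ratio s r ij : R :=
  Num.sqrt (2 * gap s ij + 1)%N%:R / Num.sqrt (2 * gap r ij + 1)%N%:R.

Lemma gap_ratio_gt0 s r ij : 0 < gap_ratio s r ij.
Proof. by rewrite divr_gt0 // sqrtr_gt0 ltr0n addn1. Qed.

Lemma gap_ratioV s r ij : (gap_ratio s r ij)^-1 = gap_ratio r s ij.
Proof. exact: invf_div. Qed.

Lemma sum_sigma_kd_ratio_le_pi s ij :
  \sum_(kd : 'I_n * 'I_n | valid_kd n kd.1 kd.2 && flips s (sigma_kd kd.1 kd.2 s) ij)
     (kd.2%:R)^-1 * gap_ratio s (sigma_kd kd.1 kd.2 s) ij <= pi.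
Proof.
apply: (sum_ratio_inj_le_pi R (@gap_sigma_kd_inj _ s ij)) => kd /andP[v f].
by have [d_eq _ _] := flips_sigma_kd v f; rewrite d_eq.
Qed.

Lemma sum_sigma_kdV_ratio_le_pi s ij :
  \sum_(kd : 'I_n * 'I_n | valid_kd n kd.1 kd.2 && flips (s * (cyc_perm n kd.1 kd.2)^-1) s ij)
     (kd.2%:R)^-1 * gap_ratio s (s * (cyc_perm n kd.1 kd.2)^-1) ij <= pi.
Proof.
apply: (sum_ratio_inj_le_pi R (@gap_sigma_kdV_inj _ s ij)) => kd /andP[v].
rewrite -{2}(sigma_kd_mulV kd.1 kd.2 s) => /(flips_sigma_kd v)[d_eq _ _].
rewrite sigma_kd_mulV in d_eq.
by rewrite [(gap s ij + _)%N]addnC d_eq.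
Qed.
End GapRatio.

Section ComplexNorm.
Variable R : realType.
Local Notation C := R[i].

Lemma normc_ge0 (z : C) : 0 <= normc z.
Proof. by case: z => a b; rewrite sqrtr_ge0. Qed.

Lemma normc_conj (z : C) : normc z^* = normc z.
Proof. by case: z => a b /=; rewrite sqrrN. Qed.

Lemma normcE (z : C) : `|z| = (normc z)%:C%C.
Proof. by case: z => a b; rewrite normc_def. Qed.

Lemma normc_sum (I : finType) (P : pred I) (F : I -> C) :
  normc (\sum_(p | P p) F p) <= \sum_(p | P p) normc (F p).
Proof.
elim/big_ind2: _ => [|x1 x2 y1 y2 le1 le2|//]; first by rewrite normc0.
exact: le_trans (le_normcD _ _) (lerD le1 le2).
Qed.

Lemma ler_dist_normc (a b : C) : `|normc a - normc b| <= normc (a - b).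
Proof.
have := le_normcD (a - b) b; have := le_normcD (b - a) a.
by rewrite !subrK -opprB normcN ler_norml; lra.
Qed.
End ComplexNorm.

Section Oracle.
Variables (R : realType) (n w : nat).
Local Notation C := R[i].
Local Notation N := (dimH n w).
Implicit Types (s r : {perm 'I_n}) (u v : 'cV[C]_N).

Definition oracle_index s (p : 'I_N) : 'I_N := enum_rank (oracle_basis s (enum_val p)).

Definition query_pair (p : 'I_N) : 'I_n * 'I_n := ((enum_val p).1.1.1, (enum_val p).1.1.2).

Lemma oracle_basisK s : involutive (@oracle_basis n w s).
Proof. by move=> [[[i j] b] c] /=; rewrite -addbA addbb addbF. Qed.

Lemma oracle_indexK s : involutive (oracle_index s).
Proof. by move=> p; rewrite /oracle_index enum_rankK oracle_basisK enum_valK. Qed.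

Lemma query_pair_oracle s p : query_pair (oracle_index s p) = query_pair p.
Proof. by rewrite /query_pair enum_rankK; case: (enum_val p) => [[[i j] b] c]. Qed.

Lemma oracle_index_id s r p : ~~ flips s r (query_pair p) ->
  oracle_index r (oracle_index s p) = p.
Proof.
rewrite /flips /query_pair /oracle_index negbK enum_rankK => /eqP.
case E: (enum_val p) => [[[i j] b] c] /= cmp_eq.
by rewrite cmp_eq -addbA addbb addbF -E enum_valK.
Qed.

Lemma oracle_mulmxE s u p : (oracle C w s *m u) p 0 = u (oracle_index s p) 0.
Proof.
rewrite mxE (bigD1 (oracle_index s p)) //= big1 ?addr0 => [|q q_neq].
  by rewrite mxE enum_rankK oracle_basisK eqxx mul1r.
rewrite mxE; case: eqP => [p_eq|_]; last by rewrite mul0r.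
by case/eqP: q_neq; rewrite /oracle_index p_eq oracle_basisK enum_valK.
Qed.

Lemma inner_oracle s r u v :
  inner (oracle C w s *m u) (oracle C w r *m v) =
  \sum_p (u p 0)^* * v (oracle_index r (oracle_index s p)) 0.
Proof.
rewrite /inner (reindex_inj (can_inj (oracle_indexK s))) /=.
by apply: eq_bigr => p _; rewrite !oracle_mulmxE oracle_indexK.
Qed.

Lemma inner_oracleB s r u v :
  inner (oracle C w s *m u) (oracle C w r *m v) - inner u v =
  \sum_(p | flips s r (query_pair p))
     (u p 0)^* * (v (oracle_index r (oracle_index s p)) 0 - v p 0).
Proof.
rewrite inner_oracle /inner -sumrB (bigID (fun p => flips s r (query_pair p))) /=.
rewrite [X in _ + X]big1 ?addr0 => [|p /oracle_index_id ->]; last by rewrite subrr.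
by apply: eq_bigr => p _; rewrite mulrBr.
Qed.

Lemma normc_inner_oracleB_le s r u v (lam : 'I_n * 'I_n -> R) : (forall ij, 0 < lam ij) ->
  normc (inner (oracle C w s *m u) (oracle C w r *m v) - inner u v) <=
  \sum_(p | flips s r (query_pair p))
     (lam (query_pair p) * normc (u p 0) ^+ 2 + normc (v p 0) ^+ 2 / lam (query_pair p)).
Proof.
move=> lam_gt0; rewrite inner_oracleB; apply: le_trans (normc_sum _ _) _.
set h := fun p => oracle_index r (oracle_index s p).
pose G p := normc (v p 0) ^+ 2 / lam (query_pair p) / 2.
have sum_Gh : \sum_(p | flips s r (query_pair p)) G (h p) =
              \sum_(p | flips s r (query_pair p)) G p.
  have h_inj : injective h by move=> p q /(can_inj (oracle_indexK r))/(can_inj (oracle_indexK s)).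
  rewrite [RHS](reindex_inj h_inj); apply: eq_big => p; rewrite /G /h !query_pair_oracle //.
apply: le_trans (_ : _ <= \sum_(p | flips s r (query_pair p))
    (lam (query_pair p) * normc (u p 0) ^+ 2 + (G (h p) + G p))) _.
  apply: ler_sum => p _; rewrite normcM normc_conj.
  have lam_p := lam_gt0 (query_pair p).
  apply: le_trans (ler_wpM2l (normc_ge0 _) (le_normcD _ _)) _.
  have := amgm (normc (u p 0)) (normc (v (h p) 0)) lam_p.
  have := amgm (normc (u p 0)) (normc (v p 0)) lam_p.
  rewrite normcN mulrDr /G /h !query_pair_oracle; lra.
rewrite !big_split /= sum_Gh lerD2l -big_split /=.
by apply: ler_sum => p _; rewrite /G; lra.
Qed.

Lemma inner_unitary m (M : 'M[C]_m) (x y : 'cV[C]_m) : M \is unitarymx ->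
  inner (M *m x) (M *m y) = inner x y.
Proof.
have innerE (a b : 'cV[C]_m) : inner a b = (map_mx Num.conj a^T *m b) 0 0.
  by rewrite mxE; apply: eq_bigr => p _; rewrite !mxE.
by move=> M_unitary; rewrite !innerE trmx_mul map_mxM mulmxA mulmxKtV.
Qed.

Lemma inner_init : (0 < n)%N -> inner (init C n w) (init C n w) = 1.
Proof.
(* Plain [basis] would refer to the topological notion imported above. *)
move=> n_gt0; pose o : Defs.basis n w := (Ordinal n_gt0, Ordinal n_gt0, false, [tuple of nseq w false]).
have initE p : init C n w p 0 = (p == enum_rank o)%:R.
  rewrite mxE -(inj_eq enum_val_inj) enum_rankK; case: (enum_val p) => [[[i j] b] c].
  rewrite !xpair_eqE -!val_eqE /= eqbF_neg -!andbA; congr [&& _, _, _ & _]%:R.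
  rewrite (@eq_all _ _ (pred1 false)) => [|x]; last by rewrite /= eqbF_neg.
  by apply/all_pred1P/eqP; rewrite size_tuple.
rewrite /inner (bigD1 (enum_rank o)) //= big1 => [|p /negbTE p_neq].
  by rewrite initE eqxx conjC1 mulr1 addr0.
by rewrite initE p_neq mulr0.
Qed.

Lemma inner_self (x : 'cV[C]_N) : inner x x = (\sum_p normc (x p 0) ^+ 2)%:C%C.
Proof.
rewrite /inner rmorph_sum; apply: eq_bigr => p _.
by rewrite mulrC -normCK normcE rmorphXn.
Qed.

Section Psi.
Variables (U : nat -> 'M[C]_N) (T : nat).
Hypotheses (n_gt0 : (0 < n)%N) (U_unitary : forall k, (k <= T)%N -> U k \is unitarymx).

Lemma inner_psi s t : (t <= T)%N -> inner (psi U s t) (psi U s t) = 1.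
Proof.
elim: t => [|t IH] t_le /=; rewrite inner_unitary ?U_unitary //; first exact: inner_init.
apply/eqP; rewrite -(IH (ltnW t_le)) -subr_eq0 inner_oracleB big_pred0 // => p.
by rewrite /flips eqxx.
Qed.

Lemma sum_sqr_normc_psi s t : (t <= T)%N -> \sum_p normc (psi U s t p 0) ^+ 2 = 1.
Proof. by move=> t_le; apply: complexI; rewrite -inner_self inner_psi. Qed.
End Psi.
End Oracle.

Section Weights.
Variables (R : realType) (n : nat).
Implicit Types (s r : {perm 'I_n}).

Lemma weightC s r : weight R[i] s r = (weight R s r)%:C%C.
Proof.
by rewrite /weight; case: [pick _ | _] => [kd|] /=; rewrite ?rmorph0 // fmorphV rmorph_nat.
Qed.

Lemma weight_ge0 s r : 0 <= weight R s r.
Proof. by rewrite /weight; case: [pick _ | _] => [kd|] //=; rewrite invr_ge0 ler0n. Qed.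

Lemma sum_weight_le s (F : {perm 'I_n} -> R) : (forall r, 0 <= F r) ->
  \sum_r weight R s r * F r <=
  \sum_(kd : 'I_n * 'I_n | valid_kd n kd.1 kd.2) (kd.2%:R)^-1 * F (sigma_kd kd.1 kd.2 s).
Proof.
move=> F_ge0; have inv_ge0 (kd : 'I_n * 'I_n) : 0 <= (kd.2%:R : R)^-1 by rewrite invr_ge0.
apply: le_trans (_ : _ <= \sum_r (\sum_(kd : 'I_n * 'I_n |
    valid_kd n kd.1 kd.2 && (r == sigma_kd kd.1 kd.2 s)) (kd.2%:R)^-1) * F r) _.
  apply: ler_sum => r _; apply: ler_wpM2r => //.
  rewrite /weight; case: pickP => [kd kd_ok|_]; last exact: sumr_ge0.
  by rewrite (bigD1 kd) //= lerDl sumr_ge0.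
under eq_bigr do rewrite mulr_suml.
rewrite (exchange_big_dep (fun kd : 'I_n * 'I_n => valid_kd n kd.1 kd.2)) /=; last first.
  by move=> r kd _ /andP[].
apply: ler_sum => kd kd_valid.
by rewrite (big_pred1 (sigma_kd kd.1 kd.2 s)) // => r; rewrite /= kd_valid.
Qed.
End Weights.

Section FlipSum.
Variables (R : realType) (n w : nat).
Local Notation N := (dimH n w).

Lemma sum_flips_le (a : {perm 'I_n} -> 'I_N -> R) : (forall s, \sum_p a s p ^+ 2 = 1) ->
  \sum_s \sum_(kd : 'I_n * 'I_n | valid_kd n kd.1 kd.2) (kd.2%:R)^-1 *
    \sum_(p | flips s (sigma_kd kd.1 kd.2 s) (query_pair p))
      (gap_ratio R s (sigma_kd kd.1 kd.2 s) (query_pair p) * a s p ^+ 2 +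
       a (sigma_kd kd.1 kd.2 s) p ^+ 2 / gap_ratio R s (sigma_kd kd.1 kd.2 s) (query_pair p))
  <= 2 * pi * n`!%:R.
Proof.
move=> sum_a1.
have sum_a : \sum_(s : {perm 'I_n}) \sum_p a s p ^+ 2 = n`!%:R.
  by under eq_bigr do rewrite sum_a1; rewrite sumr_const card_Sn.
under eq_bigr do (under eq_bigr do rewrite big_split mulrDr; rewrite big_split).
rewrite big_split /= (_ : 2 * pi * _ = pi * n`!%:R + pi * n`!%:R); last by ring.
apply: lerD; rewrite -sum_a mulr_sumr.
  apply: ler_sum => s _; apply: sum_coef_exchange_le => p; first exact: sqr_ge0.
  exact: sum_sigma_kd_ratio_le_pi.
(* Reindex the second half by the target permutation [r = s^(k,d)]. *)
rewrite exchange_big /=.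
under eq_bigr => kd _.
  rewrite (reindex_inj (mulIg (cyc_perm n kd.1 kd.2)^-1%g)) /=.
  under eq_bigr do rewrite sigma_kd_mulV.
  under eq_bigr do under eq_bigr do rewrite mulrC gap_ratioV.
  over.
rewrite exchange_big /=; apply: ler_sum => s _.
apply: sum_coef_exchange_le => p; first exact: sqr_ge0.
exact: sum_sigma_kdV_ratio_le_pi.
Qed.
End FlipSum.

Section Main.
Variables (R : realType) (n w : nat).
Local Notation N := (dimH n w).

Definition s_real (U : nat -> 'M[R[i]]_N) (t : nat) : R :=
  \sum_(s : {perm 'I_n}) \sum_(r : {perm 'I_n})
     weight R s r * normc (inner (psi U s t) (psi U r t)).

Lemma s_tE U t : s_t U t = (s_real U t)%:C%C.
Proof.
rewrite /s_t /s_real rmorph_sum; apply: eq_bigr => s _.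
rewrite rmorph_sum; apply: eq_bigr => r _; rewrite rmorphM.
by rewrite weightC; congr (_ * _); apply: normcE.
Qed.

Lemma s_real_succB_le (U : nat -> 'M[R[i]]_N) (T t : nat) : (0 < n)%N ->
  (forall k, (k <= T)%N -> U k \is unitarymx) -> (t < T)%N ->
  `|s_real U t.+1 - s_real U t| <= 2 * pi * n`!%:R.
Proof.
move=> n_gt0 U_unitary t_lt.
pose phi s := psi U s t.
pose D s r := normc (inner (oracle _ w s *m phi s) (oracle _ w r *m phi r) - inner (phi s) (phi r)).
apply: le_trans (_ : _ <= \sum_s \sum_r weight R s r * D s r) _.
  rewrite /s_real -sumrB; apply: le_trans (ler_norm_sum _ _ _) _; apply: ler_sum => s _.
  rewrite -sumrB; apply: le_trans (ler_norm_sum _ _ _) _; apply: ler_sum => r _.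
  rewrite -mulrBr normrM ger0_norm ?weight_ge0 // ler_wpM2l ?weight_ge0 //=.
  by rewrite inner_unitary ?U_unitary // ler_dist_normc.
apply: le_trans (_ : _ <= \sum_s \sum_(kd : 'I_n * 'I_n | valid_kd n kd.1 kd.2)
    (kd.2%:R)^-1 * D s (sigma_kd kd.1 kd.2 s)) _.
  by apply: ler_sum => s _; apply: sum_weight_le => r; apply: normc_ge0.
apply: le_trans (sum_flips_le (a := fun s p => normc (phi s p 0)) _); last first.
  by move=> s; apply: (sum_sqr_normc_psi n_gt0 U_unitary); apply: ltnW.
apply: ler_sum => s _; apply: ler_sum => kd _; rewrite ler_wpM2l ?invr_ge0 //.
by apply: normc_inner_oracleB_le => ij; apply: gap_ratio_gt0.
Qed.
End Main.

Local Open Scope complex_scope.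

Theorem mainTheorem3 (R : realType) (n w T : nat) (hn : (2 <= n)%N)
    (U : nat -> 'M[R[i]]_(dimH n w))
    (hU : forall t, (t <= T)%N -> U t \is unitarymx) :
  forall t : nat, (t < T)%N ->
    `| s_t U t.+1 - s_t U t | <= 2%:R * (pi : R)%:C * (n`!)%:R.
Proof.
move=> t t_lt; have n_gt0 : (0 < n)%N by apply: leq_trans hn.
have -> : 2%:R * (pi : R)%:C * n`!%:R = (2 * pi * n`!%:R)%:C by rewrite !rmorphM !rmorph_nat.
rewrite !s_tE -rmorphB normc_def /= expr0n addr0 sqrtr_sqr lecR.
exact: s_real_succB_le n_gt0 hU t_lt.
Qed.
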